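(* For every CEA $\mathcal{A}$ and every $\mathrm{SEL}\in\{\mathrm{STRICT},\mathrm{NEXT},\mathrm{LAST},\mathrm{MAX}\}$ there is a CEA $\mathcal{A}_{\mathrm{SEL}}$ such that $[\![\mathcal{A}_{\mathrm{SEL}}]\!](S)=[\![\mathrm{SEL}(\mathcal{A})]\!](S)$ for every stream $S$. Moreover, $\mathcal{A}_{\mathrm{STRICT}}$ has at most twice as many states and transitions as $\mathcal{A}$, and $\mathcal{A}_{\mathrm{NEXT}},\mathcal{A}_{\mathrm{LAST}},\mathcal{A}_{\mathrm{MAX}}$ have size at most exponential in $|\mathcal{A}|$.
   Context: Fix a schema $\mathcal{R}$ and let $\mathrm{tuples}(\mathcal{R})$ be the set of all its tuples. A stream is an infinite sequence $S=t_0t_1\ldots$ of tuples. A complex event is a non-empty finite subset of $\mathbb{N}$. Fix a set $\mathbf{U}$ of unary predicates (subsets of $\mathrm{tuples}(\mathcal{R})$), closed under union, intersection and complement, and containing $\mathrm{TRUE}=\mathrm{tuples}(\mathcal{R})$. A complex event automaton (CEA) is $\mathcal{A}=(Q,\Delta,I,F)$ with $Q$ a finite set of states, $I,F\subseteq Q$, and $\Delta\subseteq Q\times(\mathbf{U}\times\{\bullet,\circ\})\times Q$ finite. A run of $\mathcal{A}$ over $S$ reading $t_0\ldots t_n$ is $q_0\xrightarrow{P_0/m_0}q_1\cdots\xrightarrow{P_n/m_n}q_{n+1}$ with $q_0\in I$, $(q_i,(P_i,m_i),q_{i+1})\in\Delta$ and $t_i\in P_i$; accepting if $q_{n+1}\in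 F$. $\mathrm{match}(\rho)=\{i : m_i=\bullet\}$. $[\![\mathcal{A}]\!]_n(S)$ is the set of $\mathrm{match}(\rho)$ for accepting runs $\rho$ reading $t_0\ldots t_n$ with $n\in\mathrm{match}(\rho)$, and $[\![\mathcal{A}]\!](S)=\bigcup_n[\![\mathcal{A}]\!]_n(S)$. $|\mathcal{A}|=|Q|+|\Delta|$. Orders: $C_1\leq_{\mathrm{next}}C_2$ iff $C_1=C_2$ or $\min(C_1\triangle C_2)\in C_2$; $C_1\leq_{\mathrm{last}}C_2$ iff $C_1=C_2$ or $\max(C_1\triangle C_2)\in C_2$ ($\triangle$ = symmetric difference). Selection strategies: $C\in[\![\mathrm{STRICT}(\mathcal{A})]\!](S)$ iff $C\in[\![\mathcal{A}]\!](S)$ and $C$ is an interval $\{i,i+1,\dots,j\}$ of consecutive integers. $C\in[\![\mathrm{NEXT}(\mathcal{A})]\!](S)$ iff $C\in[\![\mathcal{A}]\!](S)$ and $C'\leq_{\mathrm{next}}C$ for every $C'\in[\![\mathcal{A}]\!](S)$ with $\max(C')=\max(C)$. $C\in[\![\mathrm{LAST}(\mathcal{A})]\!](S)$ iff $C\in[\![\mathcal{A}]\!](S)$ and $C'\leq_{\mathrm{last}}C$ for every $C'\in[\![\mathcal{A}]\!](S)$ with $\max(C')=\max(C)$. $C\in[\![\mathrm{MAX}(\mathcal{A})]\!](S)$ iff $C\in[\![\mathcal{A}]\!](S)$ and there is no $C'\in[\![\mathcal{A}]\!](S)$ with $\max(C')=\max(C)$ and $C\subsetneq C'$. *)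

From Stdlib Require Import List.
From mathcomp Require Import all_boot.
Set Implicit Arguments. Unset Strict Implicit. Unset Printing Implicit Defensive.

(* Tuples of the schema: an arbitrary type [T]. *)

Definition pred_class_ok (T : Type) (U : (T -> bool) -> Prop) : Prop :=
  [/\ (forall p q, U p -> U q -> U (fun t => p t || q t)),
      (forall p q, U p -> U q -> U (fun t => p t && q t)),
      (forall p, U p -> U (fun t => ~~ p t)) &
      U (fun _ => true)].

(* A complex event automaton.  Marks: [true] = bullet (mark), [false] = circ.
   The finite transition set Delta is given as a duplicate-free list. *)
Record CEA (T : Type) := MkCEA {
  st : finType;
  delta : list (st * (T -> bool) * bool * st);
  init : {set st};
  fin : {set st} }.

Definition wf_cea (T : Type) (U : (T -> bool) -> Prop) (A : CEA T) : Prop :=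
  NoDup (delta A) /\ forall q P m q', In (q, P, m, q') (delta A) -> U P.

Definition cea_size (T : Type) (A : CEA T) : nat := #|st A| + size (delta A).

Definition stream (T : Type) := nat -> T.

(* A complex event is represented by its characteristic function
   [C : nat -> bool]; the events produced below are automatically finite and
   non-empty. *)
Definition cevent := nat -> bool.

Definition acc_run (T : Type) (A : CEA T) (S : stream T) (n : nat)
  (q : nat -> st A) (P : nat -> T -> bool) (m : nat -> bool) : Prop :=
  [/\ q 0 \in init A,
      (forall i, i <= n -> In (q i, P i, m i, q i.+1) (delta A) /\ P i (S i)) &
      q n.+1 \in fin A].
Arguments acc_run {T} A S n q P m.

Definition sem_n (T : Type) (A : CEA T) (S : stream T) (n : nat) (C : cevent) : Prop :=
  exists q P m, acc_run A S n q P m /\ m n = true /\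
                (forall i, C i = (i <= n) && m i).

Definition sem (T : Type) (A : CEA T) (S : stream T) (C : cevent) : Prop :=
  exists n, sem_n A S n C.

Definition is_max (C : cevent) (n : nat) : Prop :=
  C n /\ forall j, C j -> j <= n.

Definition le_next (C1 C2 : cevent) : Prop :=
  (forall i, C1 i = C2 i) \/
  exists i, [/\ C1 i <> C2 i, (forall j, j < i -> C1 j = C2 j) & C2 i].

Definition le_last (C1 C2 : cevent) : Prop :=
  (forall i, C1 i = C2 i) \/
  exists i, [/\ C1 i <> C2 i, (forall j, i < j -> C1 j = C2 j) & C2 i].

Inductive selection := STRICT | NEXT | LAST | MAX.

Definition sel_sem (T : Type) (sel : selection) (A : CEA T) (S : stream T)
  (C : cevent) : Prop :=
  sem A S C /\
  match sel with
  | STRICT => exists i j, forall k, C k <-> (i <= k <= j)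
  | NEXT => forall C' n, sem A S C' -> is_max C' n -> is_max C n -> le_next C' C
  | LAST => forall C' n, sem A S C' -> is_max C' n -> is_max C n -> le_last C' C
  | MAX => ~ exists C' n, [/\ sem A S C', is_max C' n, is_max C n,
                            (forall i, C i -> C' i) & exists i, C' i /\ ~~ C i]
  end.

From Stdlib Require Import List ClassicalEpsilon.
From mathcomp Require Import all_boot zify.
Set Implicit Arguments. Unset Strict Implicit. Unset Printing Implicit Defensive.

(* For STRICT, flag every state with the mark of the transition that
   entered it and forbid circle transitions out of flagged states: the marked
   positions of an accepting run then form an interval ending at the last one.

   For NEXT, LAST and MAX, the new automaton guesses a run of A and, by a
   subset construction, follows every run of A on the same prefix together
   with the state of a small deterministic automaton comparing the two mark
   sequences position by position (first difference, last difference, the two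
   one-sided inclusions).  It accepts iff the guessed run accepts and no
   accepting tracked run beats it.  Its guards are the minterms over the guards
   of A, which lie in U by the closure properties.  With K the state set of the
   comparator (|K| <= 4), there are |Q| 2^(2|Q||K|+1) states and at most
   |Delta| 2^|Delta| transitions out of each, hence size 2^O(|A|). *)

Lemma In_mem (X : eqType) (x : X) (s : seq X) : In x s <-> x \in s.
Proof.
elim: s => [|y s IH] //=; rewrite in_cons.
by split=> [[->|/IH ->]|/orP [/eqP ->|/IH]]; rewrite ?eqxx ?orbT; auto.
Qed.

Lemma In_enum (X : finType) (P : pred X) x : In x (enum P) <-> P x.
Proof. by rewrite In_mem mem_enum. Qed.

Lemma nth_List (X : Type) (x0 : X) s i : nth x0 s i = List.nth i s x0.
Proof. by elim: s i => [|y s IH] [|i] //=. Qed.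

(* Transitions carry predicates, hence have no decidable equality: duplicates
   are removed classically. *)
Definition dedup (X : Type) (s : seq X) : seq X :=
  nodup (fun x y : X => excluded_middle_informative (x = y)) s.

Lemma NoDup_dedup (X : Type) (s : seq X) : NoDup (dedup s).
Proof. exact: NoDup_nodup. Qed.

Lemma In_dedup (X : Type) (s : seq X) x : In x (dedup s) <-> In x s.
Proof. exact: nodup_In. Qed.

Lemma size_dedup (X : Type) (s : seq X) : size (dedup s) <= size s.
Proof. by apply/leP/NoDup_incl_length; [exact: NoDup_dedup | move=> x /In_dedup]. Qed.

Lemma card_finset (X : finType) : #|{set X}| = 2 ^ #|X|.
Proof.
rewrite -cardsT -card_powerset; apply: eq_card => B.
by rewrite powersetE subsetT inE.
Qed.

Lemma is_max_inj C m n : is_max C m -> is_max C n -> m = n.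
Proof. by move=> [Cm maxm] [Cn maxn]; apply/anti_leq; rewrite maxm ?maxn. Qed.

Lemma is_max_zero C n j : is_max C n -> n < j -> C j = false.
Proof. by move=> [_ maxn] ltnj; apply/negbTE/negP => /maxn; rewrite leqNgt ltnj. Qed.

Lemma sem_n_is_max (T : Type) (B : CEA T) S n C : sem_n B S n C -> is_max C n.
Proof.
move=> [q [P [m [_ [mn CE]]]]]; split; first by rewrite CE leqnn mn.
by move=> j; rewrite CE => /andP [].
Qed.

Lemma sem_is_maxE (T : Type) (B : CEA T) S C n :
  is_max C n -> sem B S C <-> sem_n B S n C.
Proof.
move=> maxn; split; last by exists n.
by move=> [n' semn']; rewrite (is_max_inj maxn (sem_n_is_max semn')).
Qed.

Definition last_mark (m : nat -> bool) (i : nat) : bool :=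
  if i is i'.+1 then m i' else false.

Section Transitions.
Variables (T : Type) (A : CEA T).
Local Notation N := (size (delta A)).

Definition tr (k : 'I_N) := tnth (in_tuple (delta A)) k.
Definition tr_src k := (tr k).1.1.1.
Definition tr_pred k := (tr k).1.1.2.
Definition tr_mark k := (tr k).1.2.
Definition tr_tgt k := (tr k).2.

Lemma tr_In k : In (tr_src k, tr_pred k, tr_mark k, tr_tgt k) (delta A).
Proof.
rewrite /tr_src /tr_pred /tr_mark /tr_tgt -!surjective_pairing /tr.
by rewrite (tnth_nth (tr k)) nth_List; apply/nth_In/ltP.
Qed.

Lemma In_tr q P m q' : In (q, P, m, q') (delta A) ->
  exists k, [/\ tr_src k = q, tr_pred k = P, tr_mark k = m & tr_tgt k = q'].
Proof.
move=> /(In_nth _ _ (q, P, m, q')) [i [/ltP lti nthi]]; exists (Ordinal lti).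
by rewrite /tr_src /tr_pred /tr_mark /tr_tgt /tr (tnth_nth (q, P, m, q')) nth_List /= nthi.
Qed.

Definition prefix_run (S : stream T) j (q : nat -> st A) (P : nat -> T -> bool)
    (m : nat -> bool) :=
  q 0 \in init A /\
  forall i, i < j -> In (q i, P i, m i, q i.+1) (delta A) /\ P i (S i).

Lemma prefix_run_rcons S j q P m k :
  prefix_run S j q P m -> tr_src k = q j -> tr_pred k (S j) ->
  prefix_run S j.+1 (fun i => if i == j.+1 then tr_tgt k else q i)
    (fun i => if i == j then tr_pred k else P i)
    (fun i => if i == j then tr_mark k else m i).
Proof.
move=> [q0 run] srck predk; split=> // i; rewrite ltnS leq_eqVlt eqSS.
case: eqP => [-> _ | _ /= ltij].
  by rewrite (ltn_eqF (ltnSn j)) -srck; split=> //; exact: tr_In.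
by rewrite (@ltn_eqF i j.+1 (ltnW ltij)); exact: run.
Qed.

Lemma acc_run_of_tr S n (q : nat -> st A) (m : nat -> bool) :
  q 0 \in init A -> q n.+1 \in fin A ->
  (forall i, i <= n -> exists k,
     [/\ tr_src k = q i, tr_pred k (S i), tr_mark k = m i & tr_tgt k = q i.+1]) ->
  exists P, acc_run A S n q P m.
Proof.
move=> q0 qn steps.
pose fits i k :=
  [&& tr_src k == q i, tr_pred k (S i), tr_mark k == m i & tr_tgt k == q i.+1].
exists (fun i => if [pick k | fits i k] is Some k then tr_pred k else xpred0).
split=> // i lein; case: pickP => [k /and4P [/eqP <- predk /eqP <- /eqP <-] | nofit].
  by split; [exact: tr_In |].
have [k [srck predk markk tgtk]] := steps i lein.
by move: (nofit k); rewrite /fits srck predk markk tgtk !eqxx.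
Qed.

Definition letter (t : T) : {ffun 'I_N -> bool} := [ffun k => tr_pred k t].

Definition literal (al : {ffun 'I_N -> bool}) k : T -> bool :=
  if al k then tr_pred k else fun t => ~~ tr_pred k t.

(* Built from the guards with the closure operations of U only, so that it lies in U. *)
Definition minterm (al : {ffun 'I_N -> bool}) : T -> bool :=
  foldr (fun k P t => P t && literal al k t) (fun _ => true) (enum 'I_N).

Lemma mintermE al t : minterm al t = (al == letter t).
Proof.
have -> : minterm al t = all (fun k => al k == tr_pred k t) (enum 'I_N).
  rewrite /minterm; elim: (enum 'I_N) => //= k s ->; rewrite andbC /literal.
  by case: (al k); case: (tr_pred k t).
apply/allP/eqP => [alt | -> k _]; last by rewrite ffunE.
by apply/ffunP => k; rewrite ffunE; apply/eqP/alt; rewrite mem_enum.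
Qed.

Lemma minterm_in_class U al : pred_class_ok U -> wf_cea U A -> U (minterm al).
Proof.
case=> _ closedI closedC closedT [_ guardsU]; rewrite /minterm.
elim: (enum 'I_N) => //= k s IH; apply: closedI => //; rewrite /literal.
have := guardsU _ _ _ _ (tr_In k); case: (al k) => //; exact: closedC.
Qed.

End Transitions.

Section Comparison.
Variables (K : Type) (upd : K -> bool -> bool -> K) (k0 : K).

Fixpoint cmp_state (a b : nat -> bool) n : K :=
  if n is n'.+1 then upd (cmp_state a b n') (a n') (b n') else k0.

Lemma eq_cmp_state a b a' b' n :
  (forall i, i < n -> a i = a' i) -> (forall i, i < n -> b i = b' i) ->
  cmp_state a b n = cmp_state a' b' n.
Proof.
elim: n => //= n IH eqa eqb; rewrite eqa ?eqb // IH // => i lti.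
  by apply: eqa; exact: ltnW.
by apply: eqb; exact: ltnW.
Qed.

Lemma cmp_state_agree a b n : (forall s x, upd s x x = s) ->
  (forall i, i < n -> a i = b i) -> cmp_state a b n = k0.
Proof.
move=> updxx; elim: n => //= n IH eqab.
by rewrite eqab // updxx IH // => i lti; apply: eqab; exact: ltnW.
Qed.

End Comparison.

Lemma succ_mul_exp2_le n : 1 + n * 2 ^ n <= 2 ^ (2 * n).
Proof.
have le_n : n.+1 <= 2 ^ n := ltn_expl n (ltnSn 1).
rewrite mul2n -addnn expnD; apply: leq_trans (leq_mul le_n (leqnn (2 ^ n))).
by rewrite mulSn leq_add2r expn_gt0.
Qed.

Lemma exp_size_bound q k N : k <= 4 ->
  q * 2 * 2 ^ (q * k * 2) * (1 + N * 2 ^ N) <= 2 ^ (10 * (q + N)).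
Proof.
move=> le_k4.
have le_q : q * 2 <= 2 ^ (2 * q).
  apply: leq_trans (succ_mul_exp2_le q); case: q => // q.
  by have := expn_gt0 2 q; rewrite expnS; nia.
have le_qk : 2 ^ (q * k * 2) <= 2 ^ (8 * q) by rewrite leq_exp2l //; nia.
apply: leq_trans (leq_mul (leq_mul le_q le_qk) (succ_mul_exp2_le N)) _.
by rewrite -!expnD leq_exp2l //; lia.
Qed.

Section SelectionAutomaton.
Variables (T : Type) (A : CEA T).
Variables (K : finType) (upd : K -> bool -> bool -> K) (k0 : K) (win : pred K).
Local Notation Q := (st A).
Local Notation N := (size (delta A)).

(* A tracked run of A: its current state, the comparison state of its marks
   against those of the guessed run, and its last mark. *)
Definition tracked : finType := (Q * K * bool)%type.

Definition tracked0 : {set tracked} :=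
  [set y | [&& y.1.1 \in init A, y.1.2 == k0 & ~~ y.2]].

Definition tracked_step (R : {set tracked}) (al : {ffun 'I_N -> bool}) (b : bool) :=
  [set y : tracked | [exists z in R, exists k, [&& al k, tr_src k == z.1.1 &
     y == (tr_tgt k, upd z.1.2 (tr_mark k) b, tr_mark k)]]].

Fixpoint tracked_after (S : stream T) (M : nat -> bool) i : {set tracked} :=
  if i is i'.+1 then tracked_step (tracked_after S M i') (letter A (S i')) (M i')
  else tracked0.

Lemma mem_tracked_step R t b y :
  y \in tracked_step R (letter A t) b <-> exists z k, [/\ z \in R, tr_src k = z.1.1,
    tr_pred k t & y = (tr_tgt k, upd z.1.2 (tr_mark k) b, tr_mark k)].
Proof.
rewrite inE; split.
  move=> /exists_inP [z zR /existsP [k /and3P [alk /eqP srck /eqP ->]]].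
  by exists z, k; split=> //; move: alk; rewrite ffunE.
move=> [z [k [zR srck predk ->]]]; apply/exists_inP; exists z => //.
by apply/existsP; exists k; rewrite ffunE predk srck !eqxx.
Qed.

Lemma mem_tracked_after S M j y :
  y \in tracked_after S M j <-> exists q P m,
    prefix_run S j q P m /\ y = (q j, cmp_state upd k0 m M j, last_mark m j).
Proof.
elim: j y => [|j IH] y /=.
  rewrite inE; split=> [/and3P [q0 /eqP k0y /negbTE y2] | [q [P [m [[q0 _] ->]]]]].
    exists (fun _ => y.1.1), (fun _ => xpred0), (fun _ => false); split=> //.
    by rewrite -k0y -y2 -!surjective_pairing.
  by rewrite q0 eqxx.
rewrite mem_tracked_step; split.
  move=> [z [k [/IH [q [P [m [run ->]]]] /= srck predk ->]]].
  have run' := prefix_run_rcons run srck predk.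
  do 3 eexists; split; first exact: run'.
  rewrite /= !eqxx; congr (_, upd _ _ _, _).
  by apply: eq_cmp_state => // i lti; rewrite (ltn_eqF lti).
move=> [q [P [m [[q0 run] ->]]]].
have [inj predj] := run j (ltnSn j).
have [k [srck predk markk tgtk]] := In_tr inj.
exists (q j, cmp_state upd k0 m M j, last_mark m j), k.
split; rewrite ?predk ?markk ?tgtk //.
by apply/IH; exists q, P, m; split=> //; split=> // i lti; apply: run; exact: ltnW.
Qed.

Definition sel_state : finType := (Q * bool * {set tracked})%type.

Definition accepting (y : tracked) := [&& y.1.1 \in fin A, win y.1.2 & y.2].

Definition sel_trans (x : sel_state * 'I_N * {ffun 'I_N -> bool}) :=
  let: (s, k, al) := x in
  (s, minterm al, tr_mark k, (tr_tgt k, tr_mark k, tracked_step s.2 al (tr_mark k))).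

Definition sel_guard : pred (sel_state * 'I_N * {ffun 'I_N -> bool}) :=
  fun x => let: (s, k, al) := x in (tr_src k == s.1.1) && al k.

(* The Boolean component is the last mark: an accepted event contains the last
   position read. *)
Definition sel_cea : CEA T := @MkCEA T sel_state
  (dedup [seq sel_trans x | x <- enum sel_guard])
  [set s : sel_state | [&& s.1.1 \in init A, ~~ s.1.2 & s.2 == tracked0]]
  [set s : sel_state | [&& s.1.1 \in fin A, s.1.2 & [forall y in s.2, ~~ accepting y]]].

Lemma In_sel_delta x : In x (delta sel_cea) <-> exists s k (al : {ffun 'I_N -> bool}),
  [/\ tr_src k = s.1.1, al k & x = sel_trans (s, k, al)].
Proof.
rewrite In_dedup in_map_iff; split.
  by move=> [[[s k] al] [<- /In_enum /andP [/eqP srck alk]]]; exists s, k, al.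
by move=> [s [k [al [srck alk ->]]]]; exists (s, k, al); rewrite In_enum /= srck eqxx.
Qed.

Lemma sel_delta_step s P b s' t : In (s, P, b, s') (delta sel_cea) -> P t ->
  exists k, [/\ tr_src k = s.1.1, tr_pred k t, tr_mark k = b &
                s' = (tr_tgt k, b, tracked_step s.2 (letter A t) b)].
Proof.
move=> /In_sel_delta [s0 [k [al [srck alk [-> -> -> ->]]]]].
rewrite mintermE => /eqP alt; subst al.
by exists k; split=> //; move: alk; rewrite ffunE.
Qed.

Lemma sel_cea_wf U : pred_class_ok U -> wf_cea U A -> wf_cea U sel_cea.
Proof.
move=> okU wfA; split; first exact: NoDup_dedup.
move=> s P b s' /In_sel_delta [s0 [k [al [_ _ [_ -> _ _]]]]].
exact: minterm_in_class.
Qed.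

Lemma accepting_trackedP S M n :
  (exists2 y, y \in tracked_after S M n.+1 & accepting y) <->
  exists C', sem_n A S n C' /\ win (cmp_state upd k0 C' M n.+1).
Proof.
have eq_cmp m :
    cmp_state upd k0 (fun i => (i <= n) && m i) M n.+1 = cmp_state upd k0 m M n.+1.
  by apply: eq_cmp_state => // i; rewrite ltnS => ->.
split.
  move=> [y /mem_tracked_after [q [P [m [[q0 run] ->]]]] /and3P [qn winm mn]].
  exists (fun i => (i <= n) && m i); rewrite eq_cmp; split=> //.
  by exists q, P, m; split.
move=> [C' [[q [P [m [[q0 run qn] [mn C'E]]]]] winC']].
exists (q n.+1, cmp_state upd k0 m M n.+1, m n); last first.
  rewrite /accepting qn mn andbT -eq_cmp.
  by rewrite -(@eq_cmp_state _ upd k0 C' M) // => i _; rewrite C'E.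
by apply/mem_tracked_after; exists q, P, m.
Qed.

Lemma sel_run_proj S n q P m : acc_run sel_cea S n q P m ->
  (exists PA, acc_run A S n (fun i => (q i).1.1) PA m) /\
  forall y, y \in tracked_after S m n.+1 -> ~~ accepting y.
Proof.
move=> [q0 run qn].
have step i : i <= n -> exists k,
    [/\ tr_src k = (q i).1.1, tr_pred k (S i), tr_mark k = m i &
        q i.+1 = (tr_tgt k, m i, tracked_step (q i).2 (letter A (S i)) (m i))].
  by move=> lein; have [inq Pi] := run i lein; exact: sel_delta_step inq Pi.
have trackedE i : i <= n.+1 -> (q i).2 = tracked_after S m i.
  elim: i => [_ | i IH lti]; first by move: q0; rewrite inE => /and3P [_ _ /eqP].
  by have [k [_ _ _ ->]] := step i lti; rewrite /= IH // ltnW.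
move: q0 qn; rewrite !inE => /and3P [q0 _ _] /and3P [qn _ /forall_inP noacc].
split=> [|y]; last by rewrite -trackedE //; exact: noacc.
apply: acc_run_of_tr => // i lein.
by have [k [srck predk markk ->]] := step i lein; exists k.
Qed.

Lemma sel_run_lift S n q P m : acc_run A S n q P m -> m n ->
  (forall y, y \in tracked_after S m n.+1 -> ~~ accepting y) ->
  acc_run sel_cea S n (fun i => (q i, last_mark m i, tracked_after S m i))
    (fun i => minterm (letter A (S i))) m.
Proof.
move=> [q0 run qn] mn noacc; split.
- by rewrite inE q0 eqxx.
- move=> i lein; have [inq Pi] := run i lein.
  have [k [srck predk markk tgtk]] := In_tr inq.
  split; last by rewrite mintermE.
  apply/In_sel_delta; exists (q i, last_mark m i, tracked_after S m i), k, (letter A (S i)).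
  by split; rewrite /= ?ffunE ?predk ?markk ?tgtk.
- by rewrite inE /=; apply/and3P; split=> //; apply/forall_inP.
Qed.

Lemma beaten_iff_accepting_tracked S n C m :
  (forall i, C i = (i <= n) && m i) -> m n ->
  (exists C' n', [/\ sem A S C', is_max C' n', is_max C n' &
                     win (cmp_state upd k0 C' C n'.+1)])
  <-> exists2 y, y \in tracked_after S m n.+1 & accepting y.
Proof.
move=> CE mn.
have maxC : is_max C n by split=> [|j]; rewrite CE ?leqnn ?mn // => /andP [].
have eqC C' : cmp_state upd k0 C' C n.+1 = cmp_state upd k0 C' m n.+1.
  by apply: eq_cmp_state => // i; rewrite ltnS CE => ->.
rewrite accepting_trackedP; split.
  move=> [C' [n' [semC' maxC' maxC'' winC']]].
  move: maxC' winC'; rewrite -(is_max_inj maxC maxC'') => maxC' winC'.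
  by exists C'; rewrite -eqC; split=> //; apply/(sem_is_maxE _ _ maxC').
move=> [C' [semC' winC']]; exists C', n; split=> //; first by exists n.
  exact: sem_n_is_max semC'.
by rewrite eqC.
Qed.

Theorem sel_cea_sem S C : sem sel_cea S C <-> sem A S C /\
  ~ exists C' n, [/\ sem A S C', is_max C' n, is_max C n &
                    win (cmp_state upd k0 C' C n.+1)].
Proof.
split.
  move=> [n [q [P [m [run [mn CE]]]]]].
  have [[PA runA] noacc] := sel_run_proj run.
  split; first by exists n, (fun i => (q i).1.1), PA, m.
  rewrite (beaten_iff_accepting_tracked S CE mn) => [[y yin acc]].
  by move: (noacc y yin); rewrite acc.
move=> [[n [q [P [m [run [mn CE]]]]]]].
rewrite (beaten_iff_accepting_tracked S CE mn) => unbeaten.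
exists n; do 3 eexists; split; last by split; [exact: mn | exact: CE].
apply: (sel_run_lift run mn) => y yin; apply/negP => acc; apply: unbeaten; by exists y.
Qed.

Lemma card_sel_state : #|sel_state| = #|Q| * 2 * 2 ^ (#|Q| * #|K| * 2).
Proof. by rewrite /sel_state !card_prod card_finset !card_prod card_bool. Qed.

Lemma size_sel_delta : size (delta sel_cea) <= #|sel_state| * N * 2 ^ N.
Proof.
apply: leq_trans (size_dedup _) _; rewrite size_map -cardE.
by apply: leq_trans (max_card _) _; rewrite !card_prod card_ffun card_bool card_ord.
Qed.

Lemma sel_cea_size : #|K| <= 4 -> cea_size sel_cea <= 2 ^ (10 * cea_size A).
Proof.
move=> le_K4; apply: leq_trans (exp_size_bound _ N le_K4).
rewrite /cea_size -card_sel_state mulnDr muln1 mulnA leq_add2l.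
exact: size_sel_delta.
Qed.

End SelectionAutomaton.

Lemma eq_of_is_max C' C n : is_max C' n -> is_max C n ->
  (forall i, i < n.+1 -> C' i = C i) -> forall i, C' i = C i.
Proof.
move=> maxC' maxC agree i; case: (ltnP n i) => [ltni | lein]; last exact: agree.
by rewrite (is_max_zero maxC') ?(is_max_zero maxC).
Qed.

Lemma sel_cea_sem_le T (A : CEA T) (K : finType) upd (k0 : K) win
    (le : cevent -> cevent -> Prop) :
  (forall C' C n, is_max C' n -> is_max C n ->
     le C' C <-> ~~ win (cmp_state upd k0 C' C n.+1)) ->
  forall S C, sem (sel_cea A upd k0 win) S C <-> sem A S C /\
    forall C' n, sem A S C' -> is_max C' n -> is_max C n -> le C' C.
Proof.
move=> leE S C; rewrite sel_cea_sem; split=> [] [semC unbeaten]; split=> //.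
  move=> C' n semC' maxC' maxC; apply/(leE _ _ _ maxC' maxC)/negP => winC'.
  by apply: unbeaten; exists C', n.
move=> [C' [n [semC' maxC' maxC winC']]].
by move: (unbeaten C' n semC' maxC' maxC) => /(leE _ _ _ maxC' maxC); rewrite winC'.
Qed.

(* [Some v]: the mark sequences differ, and v is the left mark at the deciding
   position (the first one for NEXT, the last one for LAST). *)
Definition next_upd (s : option bool) (a b : bool) : option bool :=
  if s is Some _ then s else if a != b then Some a else None.

Definition last_upd (s : option bool) (a b : bool) : option bool :=
  if a != b then Some a else s.

Lemma next_upd_id s x : next_upd s x x = s.
Proof. by case: s; rewrite /next_upd ?eqxx. Qed.

Lemma last_upd_id s x : last_upd s x x = s.
Proof. by rewrite /last_upd eqxx. Qed.

Lemma cmp_next_first_diff a b n i : i < n -> a i != b i ->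
  (forall j, j < i -> a j = b j) -> cmp_state next_upd None a b n = Some (a i).
Proof.
move=> + diffi agree; elim: n => // n IH.
rewrite ltnS leq_eqVlt => /orP [/eqP eqin | ltin].
  by rewrite /= -eqin (cmp_state_agree _ next_upd_id agree) /next_upd diffi.
by rewrite /= IH.
Qed.

Lemma cmp_last_last_diff a b n i : i < n -> a i != b i ->
  (forall j, i < j -> j < n -> a j = b j) -> cmp_state last_upd None a b n = Some (a i).
Proof.
elim: n => // n IH; rewrite ltnS leq_eqVlt => /orP [/eqP -> | ltin] diffi agree.
  by rewrite /= /last_upd diffi.
rewrite /= agree // last_upd_id IH // => j ltij ltjn; apply: agree => //; exact: ltnW.
Qed.

Lemma le_next_first_diff C' C i : C' i != C i -> (forall j, j < i -> C' j = C j) ->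
  le_next C' C <-> C i.
Proof.
move=> diffi agree; split=> [[eqC | [j [diffj agreej Cj]]] | Ci].
- by move: diffi; rewrite eqC eqxx.
- case: (ltngtP i j) => [ltij | ltji | -> //].
    by move: diffi; rewrite agreej // eqxx.
  by case: diffj; exact: agree.
- by right; exists i; split=> //; exact/eqP.
Qed.

Lemma le_last_last_diff C' C i : C' i != C i -> (forall j, i < j -> C' j = C j) ->
  le_last C' C <-> C i.
Proof.
move=> diffi agree; split=> [[eqC | [j [diffj agreej Cj]]] | Ci].
- by move: diffi; rewrite eqC eqxx.
- case: (ltngtP i j) => [ltij | ltji | -> //].
    by case: diffj; exact: agree.
  by move: diffi; rewrite agreej // eqxx.
- by right; exists i; split=> //; exact/eqP.
Qed.

Lemma le_next_cmp C' C n : is_max C' n -> is_max C n ->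
  le_next C' C <-> ~~ pred1 (Some true) (cmp_state next_upd None C' C n.+1).
Proof.
move=> maxC' maxC.
case: (boolP [exists i : 'I_n.+1, C' i != C i]) =>
  [/existsP [i0 diff0] | /existsPn agree].
  have [|i /andP [ltin diffi] mini] := ex_minnP (P := fun i => (i < n.+1) && (C' i != C i)).
    by exists i0; rewrite ltn_ord diff0.
  have agree j : j < i -> C' j = C j.
    move=> ltji; apply/eqP/negP => /negP diffj.
    by move: (mini j); rewrite diffj (ltn_trans ltji ltin) leqNgt ltji => /(_ isT).
  rewrite (cmp_next_first_diff ltin diffi agree) (le_next_first_diff diffi agree).
  by move: diffi; case: (C' i); case: (C i).
have eqC := eq_of_is_max maxC' maxC (fun i lti => eqP (negPn (agree (Ordinal lti)))).
by rewrite (cmp_state_agree _ next_upd_id (fun i _ => eqC i)); split=> // _; left.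
Qed.

Lemma le_last_cmp C' C n : is_max C' n -> is_max C n ->
  le_last C' C <-> ~~ pred1 (Some true) (cmp_state last_upd None C' C n.+1).
Proof.
move=> maxC' maxC.
case: (boolP [exists i : 'I_n.+1, C' i != C i]) =>
  [/existsP [i0 diff0] | /existsPn agree].
  have [|i|i /andP [ltin diffi] maxi] :=
    ex_maxnP (P := fun i => (i < n.+1) && (C' i != C i)) (m := n).
  - by exists i0; rewrite ltn_ord diff0.
  - by case/andP.
  have agree j : i < j -> C' j = C j.
    move=> ltij; apply/eqP/negP => /negP diffj.
    have ltjn : j < n.+1.
      rewrite ltnNge; apply/negP => ltnj.
      by rewrite (is_max_zero maxC' ltnj) (is_max_zero maxC ltnj) in diffj.
    by move: (maxi j); rewrite diffj ltjn leqNgt ltij => /(_ isT).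
  rewrite (cmp_last_last_diff ltin diffi (fun j ltij _ => agree j ltij)).
  rewrite (le_last_last_diff diffi agree).
  by move: diffi; case: (C' i); case: (C i).
have eqC := eq_of_is_max maxC' maxC (fun i lti => eqP (negPn (agree (Ordinal lti)))).
by rewrite (cmp_state_agree _ last_upd_id (fun i _ => eqC i)); split=> // _; left.
Qed.

Definition max_upd (s : bool * bool) (a b : bool) : bool * bool :=
  (s.1 || b && ~~ a, s.2 || a && ~~ b).

Definition max_win (s : bool * bool) : bool := ~~ s.1 && s.2.

Lemma cmp_max_state a b n : cmp_state max_upd (false, false) a b n =
  (has (fun i => b i && ~~ a i) (iota 0 n), has (fun i => a i && ~~ b i) (iota 0 n)).
Proof.
elim: n => // n IH; rewrite [cmp_state _ _ _ _ _]/= IH.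
by rewrite -addn1 iotaD !has_cat /= !orbF.
Qed.

Lemma proper_superset_cmp C' C n : is_max C' n -> is_max C n ->
  ((forall i, C i -> C' i) /\ exists i, C' i /\ ~~ C i) <->
  max_win (cmp_state max_upd (false, false) C' C n.+1).
Proof.
move=> maxC' maxC; rewrite cmp_max_state /max_win.
have memI i : (i \in iota 0 n.+1) = (i <= n) by rewrite mem_iota add0n ltnS.
split.
  move=> [sub [i [C'i nCi]]]; apply/andP; split.
    by apply/hasPn => j _; case: (boolP (C j)) => [/sub -> | ].
  apply/hasP; exists i; last by rewrite C'i.
  by rewrite memI; exact: maxC'.2.
move=> /andP [/hasPn sub /hasP [i _ /andP [C'i nCi]]]; split; last by exists i.
move=> j Cj; have := sub j; rewrite memI Cj /= => /(_ (maxC.2 j Cj)).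
exact: negbNE.
Qed.

Lemma max_cea_sem T (A : CEA T) S C :
  sem (sel_cea A max_upd (false, false) max_win) S C <-> sel_sem MAX A S C.
Proof.
rewrite sel_cea_sem; split=> [] [semC unbeaten]; split=> //.
  move=> [C' [n [semC' maxC' maxC sub super]]]; apply: unbeaten; exists C', n.
  by split=> //; apply/(proper_superset_cmp maxC' maxC).
move=> [C' [n [semC' maxC' maxC winC']]]; apply: unbeaten; exists C', n.
by have [sub super] := (proper_superset_cmp maxC' maxC).2 winC'; split.
Qed.

Lemma marks_persist m n : (forall i, i <= n -> last_mark m i ==> m i) ->
  forall i j, i <= j <= n -> m i -> m j.
Proof.
move=> chain i j /andP []; elim: j => [|j IH]; first by rewrite leqn0 => /eqP ->.
rewrite leq_eqVlt => /orP [/eqP -> // | leij] ltjn mi.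
exact: implyP (chain j.+1 ltjn) (IH leij (ltnW ltjn) mi).
Qed.

Lemma interval_of_persistent_marks m n : (forall i, i <= n -> last_mark m i ==> m i) ->
  m n -> exists i, forall k, (k <= n) && m k = (i <= k <= n).
Proof.
move=> chain mn.
have [|i /andP [lein mi] mini] := ex_minnP (P := fun i => (i <= n) && m i).
  by exists n; rewrite leqnn.
exists i => k; apply/idP/idP => [/andP [lekn mk] | /andP [leik lekn]].
  by rewrite lekn andbT; apply: mini; rewrite lekn.
by rewrite lekn (marks_persist chain (i := i)) ?leik.
Qed.

Section Strict.
Variables (T : Type) (A : CEA T).
Local Notation Q := (st A).

Definition strict_state : finType := (Q * bool)%type.

(* The flag of a state is the last mark; a bullet transition may leave a
   flagged state, a circle transition may not. *)
Definition strict_trans (x : Q * (T -> bool) * bool * Q) (c : bool) :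
    strict_state * (T -> bool) * bool * strict_state :=
  let: (p, P, m, q) := x in ((p, c), P, m, (q, m)).

Definition strict_cea : CEA T := @MkCEA T strict_state
  (dedup ([seq strict_trans x false | x <- delta A] ++
          [seq strict_trans x true | x <- delta A & x.1.2]))
  [set s : strict_state | (s.1 \in init A) && ~~ s.2]
  [set s : strict_state | (s.1 \in fin A) && s.2].

Lemma In_strict_delta y : In y (delta strict_cea) <-> exists p P m q c,
  [/\ In (p, P, m, q) (delta A), c ==> m & y = ((p, c), P, m, (q, m))].
Proof.
rewrite In_dedup in_app_iff !in_map_iff; split.
  case=> [[[[[p P] m] q] [<- inx]] | [[[[p P] m] q] [<- /filter_In [inx /= mm]]]].
    by exists p, P, m, q, false.
  by exists p, P, m, q, true; split=> //; rewrite mm.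
move=> [p [P [m [q [[] [inx /= cm ->]]]]]]; last by left; exists (p, P, m, q).
by right; exists (p, P, m, q); split; last by apply: (proj2 (filter_In _ _ _)).
Qed.

Lemma strict_cea_wf U : wf_cea U A -> wf_cea U strict_cea.
Proof.
move=> [_ guardsU]; split; first exact: NoDup_dedup.
move=> s P m s' /In_strict_delta [p [P' [m' [q [c [inx _ [_ -> _ _]]]]]]].
exact: guardsU inx.
Qed.

Lemma strict_cea_card : #|st strict_cea| <= 2 * #|Q|.
Proof. by rewrite /= /strict_state card_prod card_bool mulnC. Qed.

Lemma strict_cea_size_delta : size (delta strict_cea) <= 2 * size (delta A).
Proof.
apply: leq_trans (size_dedup _) _.
by rewrite size_cat !size_map size_filter mul2n -addnn leq_add2l count_size.
Qed.

Lemma strict_run_proj S n q P m : acc_run strict_cea S n q P m ->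
  acc_run A S n (fun i => (q i).1) P m /\ forall i, i <= n -> last_mark m i ==> m i.
Proof.
move=> [q0 run qn].
have step i : i <= n -> [/\ In ((q i).1, P i, m i, (q i.+1).1) (delta A), P i (S i),
    (q i).2 ==> m i & (q i.+1).2 = m i].
  move=> lein; have [/In_strict_delta [p [P' [m' [q' [c [inx cm eqi]]]]]] Pi] := run i lein.
  by case: eqi Pi => -> -> -> ->.
have flagE i : i <= n.+1 -> (q i).2 = last_mark m i.
  case: i => [_ | i lein]; first by move: q0; rewrite inE => /andP [_ /negbTE].
  by have [_ _ _ ->] := step i lein.
move: q0 qn; rewrite !inE => /andP [q0 _] /andP [qn _]; split.
  by split=> // i lein; have [] := step i lein.
move=> i lein; have [_ _ flag_mark _] := step i lein.
by rewrite -flagE // leqW.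
Qed.

Theorem strict_cea_sem S C : sem strict_cea S C <-> sel_sem STRICT A S C.
Proof.
split.
  move=> [n [q [P [m [run [mn CE]]]]]]; have [runA chain] := strict_run_proj run.
  split; first by exists n, (fun i => (q i).1), P, m.
  have [i intv] := interval_of_persistent_marks chain mn.
  by exists i, n => k; rewrite CE intv.
move=> [[n [q [P [m [[q0 run qn] [mn CE]]]]]] [i [j intv]]].
have /andP [lein lenj] : i <= n <= j by apply/intv; rewrite CE leqnn mn.
have mE k : k <= n -> m k = (i <= k).
  move=> lekn; apply/idP/idP => [mk | leik].
    by have /intv /andP [] : C k by rewrite CE lekn mk.
  have : C k by apply/intv; rewrite leik (leq_trans lekn lenj).
  by rewrite CE lekn.
exists n, (fun k => (q k, last_mark m k)), P, m; split=> //; split.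
- by rewrite inE q0.
- move=> k lekn; have [ink Pk] := run k lekn; split=> //.
  apply/In_strict_delta; exists (q k), (P k), (m k), (q k.+1), (last_mark m k); split=> //.
  case: k lekn {ink Pk} => //= k lekn; rewrite mE ?(ltnW lekn) // mE //.
  by apply/implyP; exact: leqW.
- by rewrite inE /= qn mn.
Qed.

End Strict.

Theorem theorem4 :
  exists c : nat,
  forall (T : Type) (U : (T -> bool) -> Prop),
  pred_class_ok U ->
  forall (A : CEA T), wf_cea U A ->
  forall sel : selection,
  exists A' : CEA T,
    [/\ wf_cea U A',
        (forall (S : stream T) (C : cevent), sem A' S C <-> sel_sem sel A S C) &
        (if sel is STRICT
         then #|st A'| <= 2 * #|st A| /\ size (delta A') <= 2 * size (delta A)
         else cea_size A' <= 2 ^ (c * cea_size A))].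
Proof.
exists 10 => T U okU A wfA [].
- exists (strict_cea A); split; first exact: strict_cea_wf.
    exact: strict_cea_sem.
  by split; [exact: strict_cea_card | exact: strict_cea_size_delta].
- exists (sel_cea A next_upd None (pred1 (Some true))); split; first exact: sel_cea_wf.
    exact: sel_cea_sem_le le_next_cmp.
  by apply: sel_cea_size; rewrite card_option card_bool.
- exists (sel_cea A last_upd None (pred1 (Some true))); split; first exact: sel_cea_wf.
    exact: sel_cea_sem_le le_last_cmp.
  by apply: sel_cea_size; rewrite card_option card_bool.
- exists (sel_cea A max_upd (false, false) max_win); split; first exact: sel_cea_wf.
    exact: max_cea_sem.
  by apply: sel_cea_size; rewrite card_prod card_bool.
Qed.
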